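(* Let $k\ge 2$. Every undirected graph $G$ whose acyclic chromatic number is at most $k$ satisfies $\chi_p(G)\le k\cdot 2^{k-2}$.
   Context: An acyclic $k$-coloring of an undirected simple graph is a proper vertex coloring with $k$ colors such that the subgraph induced by any two color classes is a forest; the acyclic chromatic number is the least such $k$. An oriented graph is a directed graph with no loops and no pair of opposite arcs; an orientation of $G$ is obtained by orienting each edge. A homomorphism of oriented graphs $\vec G\to\vec H$ is a vertex map sending every arc $uv$ to an arc $\varphi(u)\varphi(v)$. To push a vertex means to reverse all arcs incident with it; the push graph $[\vec G]$ is the set of oriented graphs obtainable from $\vec G$ by pushing some set of vertices (its presentations). $[\vec G]$ admits a homomorphism to $\vec H$ if some presentation does. The push chromatic number $\chi_p([\vec G])$ is the minimum number of vertices of an oriented graph $\vec H$ with $[\vec G]\to\vec H$, and $\chi_p(G)$ is the maximum of $\chi_p([\vec G])$ over all orientations $\vec G$ of $G$. *)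

From mathcomp Require Import all_boot.
Set Implicit Arguments. Unset Strict Implicit. Unset Printing Implicit Defensive.

Definition simple_graph (T : finType) (e : rel T) : Prop :=
  irreflexive e /\ symmetric e.

Definition is_graph_cycle (T : finType) (e : rel T) (s : seq T) : Prop :=
  [/\ uniq s, 3 <= size s & cycle e s].

Definition acyclic_coloring (T : finType) (e : rel T) (k : nat) (c : T -> 'I_k)
  : Prop :=
  (forall x y, e x y -> c x != c y) /\
  (forall (i j : 'I_k) (s : seq T),
      all (fun x => (c x == i) || (c x == j)) s -> ~ is_graph_cycle e s).

Definition acyclic_chromatic_le (T : finType) (e : rel T) (k : nat) : Prop :=
  exists k', k' <= k /\ exists c : T -> 'I_k', acyclic_coloring e c.

Definition oriented (T : finType) (a : rel T) : Prop :=
  irreflexive a /\ (forall x y, a x y -> ~~ a y x).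

Definition orientation_of (T : finType) (e a : rel T) : Prop :=
  oriented a /\ (forall x y, e x y = a x y || a y x).

Definition push (T : finType) (a : rel T) (X : {set T}) : rel T :=
  fun x y => if (x \in X) != (y \in X) then a y x else a x y.

Definition ohom (T U : finType) (a : rel T) (b : rel U) (phi : T -> U) : Prop :=
  forall x y, a x y -> b (phi x) (phi y).

Definition push_hom (T U : finType) (a : rel T) (b : rel U) : Prop :=
  exists (X : {set T}) (phi : T -> U), ohom (push a X) b phi.

Definition push_chromatic_le (T : finType) (a : rel T) (m : nat) : Prop :=
  exists n, n <= m /\ exists b : rel 'I_n, oriented b /\ push_hom a b.

Definition graph_push_chromatic_le (T : finType) (e : rel T) (m : nat) : Prop :=
  forall a : rel T, orientation_of e a -> push_chromatic_le a m.

From mathcomp Require Import all_boot.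

(* For two colours i < j the edges between the colour classes form a forest,
   and on a forest every edge labelling is a coboundary: there are vertex bits
   f with f u + f v = [the edge uv is oriented from colour i to colour j].
   Collecting these bits, each vertex u gets one bit for every colour other
   than its own, and the orientation of an edge uv is the sum of the bit of u
   for the colour of v and the bit of v for the colour of u.  Pushing u exactly
   when its bit for the least colour other than its own is set normalises it
   to 0, so every vertex is described by its colour and k - 2 bits, and the
   rule above defines an oriented target graph on these k * 2^(k-2) codes. *)

Set Implicit Arguments.
Unset Strict Implicit.
Unset Printing Implicit Defensive.

Definition cycle_free (T : finType) (e : rel T) : Prop :=
  forall s, ~ is_graph_cycle e s.

Definition induced (T : finType) (e : rel T) (P : pred T) : rel T :=
  fun u v => [&& e u v, P u & P v].

Definition edge_set (T : finType) (e : rel T) : {set T * T} :=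
  [set z | e z.1 z.2].

Section RemoveEdge.

Variables (T : finType) (e : rel T) (x y : T).

Definition remove_edge : rel T :=
  fun u v => e u v && ~~ ((u == x) && (v == y) || (u == y) && (v == x)).

Lemma remove_edge_sub : subrel remove_edge e.
Proof. by move=> u v /andP[]. Qed.

Lemma remove_edge_sym : symmetric e -> symmetric remove_edge.
Proof.
by move=> sym u v; rewrite /remove_edge sym orbC (andbC (v == x)) (andbC (v == y)).
Qed.

Lemma remove_edge_irr : irreflexive e -> irreflexive remove_edge.
Proof. by move=> irr u; rewrite /remove_edge irr. Qed.

Lemma cycle_free_remove_edge : cycle_free e -> cycle_free remove_edge.
Proof.
move=> acyc s [us ss cs]; apply: (@acyc s); split=> //.
exact: (sub_cycle remove_edge_sub cs).
Qed.

Lemma card_edge_set_remove_edge :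
  e x y -> #|edge_set remove_edge| < #|edge_set e|.
Proof.
move=> exy; apply: proper_card; apply/properP; split.
  by apply/subsetP => z; rewrite !inE => /remove_edge_sub.
by exists (x, y); rewrite !inE //= /remove_edge !eqxx andbF.
Qed.

Hypotheses (sym : symmetric e) (irr : irreflexive e) (acyc : cycle_free e).
Hypothesis exy : e x y.

(* A path from x to y avoiding the edge xy would close a cycle with it. *)
Lemma cycle_free_remove_edge_disconnect : ~~ connect remove_edge x y.
Proof.
apply/negP => /connectP[p0 /shortenP[p pp up _] lastp].
case: p pp up lastp => [|y1 [|y2 p]] pp up /= lastp.
- by move: exy; rewrite -lastp irr.
- by move: pp; rewrite /= -lastp /remove_edge !eqxx andbF.
- apply: (@acyc (x :: y1 :: y2 :: p)); split=> //.
  by rewrite /cycle rcons_path (sub_path remove_edge_sub pp) /= -lastp sym.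
Qed.

Lemma coboundary_remove_edge (p : rel T) (f : T -> bool) :
  p x y = p y x -> (forall u v, remove_edge u v -> f u (+) f v = p u v) ->
  exists g : T -> bool, forall u v, e u v -> g u (+) g v = p u v.
Proof.
move=> pxy fP.
have extend (g : T -> bool) : g x (+) g y = p x y ->
    (forall u v, remove_edge u v -> g u (+) g v = p u v) ->
    forall u v, e u v -> g u (+) g v = p u v.
  move=> gxy gP u v euv; have [/gP //|] := boolP (remove_edge u v).
  rewrite /remove_edge euv /= negbK => /orP[]/andP[/eqP-> /eqP->] //.
  by rewrite addbC gxy.
have [/eqP fxy|fxy] := boolP (f x (+) f y == p x y); first by exists f; apply: extend.
(* Otherwise flip f on the component of x in the graph without the edge xy. *)
exists (fun z => f z (+) connect remove_edge x z); apply: extend.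
  rewrite connect0 (negbTE cycle_free_remove_edge_disconnect).
  by move: fxy; case: (f x); case: (f y); case: (p x y).
have csym := sym_connect_sym (remove_edge_sym sym).
move=> u v ruv; rewrite -fP //.
have -> : connect remove_edge x v = connect remove_edge x u.
  by apply: same_connect_r => //; apply: connect1; rewrite remove_edge_sym.
by case: (f u); case: (f v); case: (connect remove_edge x u).
Qed.

End RemoveEdge.

Lemma cycle_free_coboundary (T : finType) (e p : rel T) :
  symmetric e -> irreflexive e -> cycle_free e ->
  (forall u v, e u v -> p u v = p v u) ->
  exists f : T -> bool, forall u v, e u v -> f u (+) f v = p u v.
Proof.
have [n] := ubnP #|edge_set e|; elim: n e => // n IH e cardE sym irr acyc psym.
have [[x y] /= exy|noedge] := pickP (fun z : T * T => e z.1 z.2); last first.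
  by exists (fun=> false) => u v euv; have := noedge (u, v); rewrite /= euv.
have [|||||f fP] := IH (remove_edge e x y).
- exact: leq_trans (card_edge_set_remove_edge exy) (ltnSE cardE).
- exact: remove_edge_sym.
- exact: remove_edge_irr.
- exact: cycle_free_remove_edge.
- by move=> u v /remove_edge_sub; apply: psym.
exact: (coboundary_remove_edge sym irr acyc exy (psym x y exy) fP).
Qed.

Lemma orientation_arc_edge (T : finType) (e a : rel T) u v :
  orientation_of e a -> a u v -> e u v.
Proof. by case=> _ eE auv; rewrite eE auv. Qed.

Lemma orientation_arc_swap (T : finType) (e a : rel T) u v :
  orientation_of e a -> e u v -> a v u = ~~ a u v.
Proof.
case=> [[_ anti] eE]; rewrite eE; have := anti u v.
by case: (a u v) => [/(_ isT)/negbTE|_ /= ->].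
Qed.

Lemma orientation_push (T : finType) (e a : rel T) (X : {set T}) :
  orientation_of e a -> orientation_of e (push a X).
Proof.
case=> [[irr anti] eE]; rewrite /push; split; last first.
  by move=> u v; rewrite eE eq_sym; case: ifP => _ //; rewrite orbC.
split; first by move=> u; rewrite eqxx irr.
by move=> u v; rewrite eq_sym; case: ifP => _; apply: anti.
Qed.

Lemma push_edge (T : finType) (e a : rel T) (X : {set T}) u v :
  orientation_of e a -> e u v ->
  push a X u v = a u v (+) (u \in X) (+) (v \in X).
Proof.
move=> ao euv; rewrite /push (orientation_arc_swap ao euv).
by case: (a u v); case: (u \in X); case: (v \in X).
Qed.

Lemma orientation_colour_order (T : finType) (e a : rel T) k (c : T -> 'I_k)
    (w : T -> 'I_k -> bool) :
  orientation_of e a -> (forall u v, e u v -> c u != c v) ->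
  (forall u v, e u v -> c u < c v -> a u v = w u (c v) (+) w v (c u)) ->
  forall u v, a u v -> (c u < c v) = w u (c v) (+) w v (c u).
Proof.
move=> ao proper wP u v auv; have euv := orientation_arc_edge ao auv.
have [lt|gt|eq] := ltngtP (c u) (c v).
- by rewrite -wP.
- have evu : e v u by case: ao => _ eE; rewrite eE auv orbT.
  by rewrite addbC -wP // (orientation_arc_swap ao euv) auv.
- by move: (proper u v euv); rewrite -val_eqE /= eq eqxx.
Qed.

Section AcyclicColoring.

Variables (T : finType) (e : rel T) (k : nat) (c : T -> 'I_k).
Hypotheses (sg : simple_graph e) (ac : acyclic_coloring e c).

Lemma cycle_free_bicoloured (i j : 'I_k) :
  cycle_free (induced e [pred u | (c u == i) || (c u == j)]).
Proof.
move=> s [us ss cs]; apply: (ac.2 i j s); last first.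
  by split=> //; apply: sub_cycle cs => u v /andP[].
by apply/allP => u us'; have /and3P[] := next_cycle cs us'.
Qed.

Lemma acyclic_coloring_bits (a : rel T) : exists bit : T -> 'I_k -> bool,
  forall u v, e u v -> c u < c v -> a u v = bit u (c v) (+) bit v (c u).
Proof.
have [irr sym] := sg.
pose p u v := if c u < c v then a u v else a v u.
have /fin_all_exists[F FP] (ij : 'I_k * 'I_k) : exists f : T -> bool,
    forall u v, induced e [pred u | (c u == ij.1) || (c u == ij.2)] u v ->
    f u (+) f v = p u v.
  apply: cycle_free_coboundary.
  - by move=> u v; rewrite /induced sym; congr (_ && _); rewrite andbC.
  - by move=> u; rewrite /induced irr.
  - exact: cycle_free_bicoloured.
  - move=> u v /and3P[euv _ _]; rewrite /p.
    have [//|//|eq] := ltngtP (c u) (c v).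
    by move: (ac.1 u v euv); rewrite -val_eqE /= eq eqxx.
exists (fun u (j : 'I_k) => if c u < j then F (c u, j) u else F (j, c u) u).
move=> u v euv lt; rewrite lt ltnNge (ltnW lt) /= FP; first by rewrite /p lt.
by rewrite /induced /= euv !eqxx orbT.
Qed.

End AcyclicColoring.

Lemma acyclic_coloring_widen (T : finType) (e : rel T) k k' (c : T -> 'I_k')
    (le_k'k : k' <= k) :
  acyclic_coloring e c -> acyclic_coloring e (widen_ord le_k'k \o c).
Proof.
case=> proper acyc; split=> [u v /proper|i j s sP].
  by rewrite -!val_eqE.
case: s sP => [_ []//|u0 s] sP.
pose narrow (l : 'I_k) : 'I_k' := insubd (c u0) l.
have narrowP u l : widen_ord le_k'k (c u) == l -> c u == narrow l.
  by rewrite -!val_eqE val_insubd /= => /eqP <-; rewrite ltn_ord.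
apply: (acyc (narrow i) (narrow j)); apply: sub_all sP => u /=.
by case/orP => /narrowP ->; rewrite ?orbT.
Qed.

Section PushTarget.

Variable K : nat.

(* A colour i together with the bits at the colours other than i and
   lift i ord0; the bit at lift i ord0 is the one normalised to false by
   pushing, so code_bit reads it (and the meaningless bit at i) as false. *)
Definition push_code := ('I_K.+2 * {ffun 'I_K -> bool})%type.

Definition code_bit (x : push_code) (j : 'I_K.+2) : bool :=
  if unlift x.1 j is Some j1 then
    if unlift ord0 j1 is Some t then x.2 t else false
  else false.

Definition code_arc : rel push_code :=
  fun x y => (x.1 != y.1) && ((x.1 < y.1) == code_bit x y.1 (+) code_bit y x.1).

Definition encode (i : 'I_K.+2) (w : 'I_K.+2 -> bool) : push_code :=
  (i, [ffun t => w (lift i (lift ord0 t))]).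

Lemma card_push_code : #|{: push_code}| = K.+2 * 2 ^ K.
Proof. by rewrite card_prod card_ffun card_bool !card_ord. Qed.

Lemma code_arc_oriented : oriented code_arc.
Proof.
split=> [x|x y /andP[ne /eqP bitsP]]; first by rewrite /code_arc eqxx.
rewrite /code_arc eq_sym ne addbC -bitsP /=.
have [//|//|eq] := ltngtP x.1 y.1.
by move: ne; rewrite -val_eqE /= eq eqxx.
Qed.

Lemma code_bit_encode (i j : 'I_K.+2) (w : 'I_K.+2 -> bool) :
  j != i -> w (lift i ord0) = false -> code_bit (encode i w) j = w j.
Proof.
move=> ne w0; rewrite /code_bit /=.
case: unliftP => [j1 ->|eq]; last by rewrite eq eqxx in ne.
by case: unliftP => [t ->|->]; rewrite ?ffunE ?w0.
Qed.

End PushTarget.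

Lemma push_chromatic_le_hom (T U : finType) (a : rel T) (b : rel U)
    (X : {set T}) (phi : T -> U) :
  oriented b -> ohom (push a X) b phi -> push_chromatic_le a #|{: U}|.
Proof.
case=> irr anti hom; exists #|{: U}|; split=> //.
exists (fun i j => b (enum_val i) (enum_val j)); split.
  by split=> [i|i j]; [apply: irr | apply: anti].
by exists X, (fun u => enum_rank (phi u)) => u v /hom; rewrite !enum_rankK.
Qed.

Lemma acyclic_coloring_push_chromatic_le K (T : finType) (e a : rel T)
    (c : T -> 'I_K.+2) :
  simple_graph e -> acyclic_coloring e c -> orientation_of e a ->
  push_chromatic_le a (K.+2 * 2 ^ K).
Proof.
move=> sg ac ao; have [bit bitP] := acyclic_coloring_bits sg ac a.
pose X := [set u | bit u (lift (c u) ord0)].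
pose w u j := bit u j (+) (u \in X).
have wP u v : e u v -> c u < c v -> push a X u v = w u (c v) (+) w v (c u).
  move=> euv lt; rewrite (push_edge X ao euv) bitP // /w.
  by case: (bit u _); case: (bit v _); case: (u \in X); case: (v \in X).
have w0 u : w u (lift (c u) ord0) = false by rewrite /w inE addbb.
rewrite -card_push_code.
apply: (push_chromatic_le_hom (phi := fun u => encode (c u) (w u)))
  (code_arc_oriented K) _ => u v auv.
have euv := orientation_arc_edge (orientation_push X ao) auv.
have cuv := ac.1 u v euv; have cvu : c v != c u by rewrite eq_sym.
rewrite /code_arc /= cuv !code_bit_encode //.
by rewrite (orientation_colour_order (orientation_push X ao) ac.1 wP auv) eqxx.
Qed.

Theorem theorem3 (k : nat) (hk : 2 <= k) (T : finType) (e : rel T) :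
  simple_graph e -> acyclic_chromatic_le e k ->
  graph_push_chromatic_le e (k * 2 ^ (k - 2)).
Proof.
move=> sg [k' [le_k'k [c ac]]] a ao.
case: k hk le_k'k => [|[|K]] // _ le_k'k.
rewrite !subSS subn0.
exact: acyclic_coloring_push_chromatic_le sg (acyclic_coloring_widen le_k'k ac) ao.
Qed.
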